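(* Let $T:X\to X$ be a continuous map on a Hausdorff topological space $X$. The following are equivalent: (i) $T$ is quasi-rigid; (ii) $T$ is $\mathcal{F}(A)$-recurrent for some infinite set $A\subset\mathbb{N}_0$; (iii) $T$ is $\mathcal{F}$-recurrent for some Furstenberg family $\mathcal{F}$ which is a filter and has a countable base (i.e. there are $A_k\in\mathcal{F}$, $k\in\mathbb{N}$, such that every member of $\mathcal{F}$ contains some $A_k$). If moreover $X$ is second-countable, these are also equivalent to: (iv) $T$ is $\mathcal{F}$-recurrent for some Furstenberg family $\mathcal{F}$ with the finite intersection property.
   Context: A Furstenberg family is a collection $\mathcal{F}$ of subsets of $\mathbb{N}_0$ such that every $A\in\mathcal{F}$ is infinite, $B\in\mathcal{F}$ whenever $A\in\mathcal{F}$ and $A\subset B$, and $A\cap[n,\infty)\in\mathcal{F}$ for all $A\in\mathcal{F}$, $n\in\mathbb{N}$. $\mathcal{F}$ is a filter if it is hereditarily upward and $A\cap B\in\mathcal{F}$ for all $A,B\in\mathcal{F}$; it has the finite intersection property if every finite subcollection has non-empty intersection. For infinite $A\subset\mathbb{N}_0$, $\mathcal{F}(A)=\{B\subset\mathbb{N}_0:A\setminus B \text{ is finite}\}$. For $x\in X$ and $U\subset X$, $N(x,U)=\{n\in\mathbb{N}_0:T^nx\in U\}$. A point $x$ is $\mathcal{F}$-recurrent if $N(x,U)\in\mathcal{F}$ for every neighbourhood $U$ of $x$; $T$ is $\mathcal{F}$-recurrent if the set of $\mathcal{F}$-recurrent points is dense. $T$ is quasi-rigid if there exist a strictly increasing sequence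 $(n_k)$ of positive integers and a dense $Y\subset X$ with $T^{n_k}x\to x$ for every $x\in Y$. *)

From HB Require Import structures.
From mathcomp Require Import all_boot all_order all_algebra.
From mathcomp Require Import all_classical all_reals all_analysis.
Set Implicit Arguments. Unset Strict Implicit. Unset Printing Implicit Defensive.
Import Order.TTheory GRing.Theory Num.Theory.
Local Open Scope classical_set_scope.

Definition furstenberg_family (F : set (set nat)) : Prop :=
  [/\ (forall A, F A -> infinite_set A),
      (forall A B, F A -> A `<=` B -> F B) &
      (forall A (n : nat), F A -> (0 < n)%N -> F (A `&` [set k | (n <= k)%N]))].

Definition family_filter (F : set (set nat)) : Prop :=
  (forall A B, F A -> A `<=` B -> F B) /\
  (forall A B, F A -> F B -> F (A `&` B)).

Definition family_fip (F : set (set nat)) : Prop :=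
  forall (n : nat) (A : nat -> set nat),
    (forall i, (i < n)%N -> F (A i)) ->
    exists m : nat, forall i, (i < n)%N -> A i m.

Definition family_countable_base (F : set (set nat)) : Prop :=
  exists Ak : nat -> set nat,
    (forall k, F (Ak k)) /\ (forall B, F B -> exists k, Ak k `<=` B).

Definition cofinite_family (A : set nat) : set (set nat) :=
  [set B | finite_set (A `\` B)].

Definition return_set (X : Type) (T : X -> X) (x : X) (U : set X) : set nat :=
  [set n | U (iter n T x)].

Definition F_recurrent_point (X : topologicalType) (F : set (set nat))
  (T : X -> X) (x : X) : Prop :=
  forall U, nbhs x U -> F (return_set T x U).

Definition F_recurrent (X : topologicalType) (F : set (set nat)) (T : X -> X) : Prop :=
  dense [set x | F_recurrent_point F T x].

Definition quasi_rigid (X : topologicalType) (T : X -> X) : Prop :=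
  exists nk : nat -> nat,
    (forall k, (0 < nk k)%N) /\ (forall k, (nk k < nk k.+1)%N) /\
    exists Y : set X, dense Y /\
      forall x, Y x -> (fun k => iter (nk k) T x) @ \oo --> x.

From HB Require Import structures.
From mathcomp Require Import all_boot all_order all_algebra.
From mathcomp Require Import all_classical all_reals all_analysis.
Local Open Scope classical_set_scope.

(** A quasi-rigidity sequence (n_k) makes every point of the dense set Y
    recurrent along the cofinite family of {n_k}, a filter with a countable
    base and hence with the finite intersection property.  Conversely, if F
    has the finite intersection property and a countable base (A_k), pick
    n_k > n_(k-1) in A_0 ∩ ... ∩ A_k; every F-recurrent point then satisfies
    T^(n_k) x -> x.  Without a base but with a countable basis (e_j) of X,
    do the same for a dense sequence (y_i) of F-recurrent points, choosing
    n_k so that T^(n_k) y_i lies in every e_j ∋ y_i with i, j <= k. *)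

Lemma finite_set_nat_bounded (S : set nat) :
  finite_set S -> exists M, forall a, S a -> (a < M)%N.
Proof.
move=> /finite_fsetP[A ->]; exists (\max_(a <- finmap.enum_fset A) a).+1.
by move=> a /= Aa; rewrite ltnS; exact: (@leq_bigmax_seq _ _ xpredT id a).
Qed.

Lemma infinite_set_nat_gt {S : set nat} (m : nat) :
  infinite_set S -> exists n, (m < n)%N /\ S n.
Proof.
move=> infS; apply: contrapT => noS; apply: infS.
apply: (@sub_finite_set _ _ `I_m.+1); last exact: finite_II.
by move=> n Sn /=; rewrite ltnNge; apply/negP => mn; apply: noS; exists n.
Qed.

Lemma leq_incr_seq (u : nat -> nat) :
  (forall k, (u k < u k.+1)%N) -> forall k, (k <= u k)%N.
Proof. by move=> u_incr; elim=> // k IHk; exact: leq_ltn_trans IHk (u_incr k). Qed.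

Lemma increasing_seq_choice (G : nat -> set nat) :
  (forall k m, exists n, (m < n)%N /\ G k n) ->
  exists u : nat -> nat,
    [/\ forall k, (0 < u k)%N, forall k, (u k < u k.+1)%N & forall k, G k (u k)].
Proof.
move=> G_unbounded.
have [f fP] : {f : nat -> nat -> nat & forall k m, (m < f k m)%N /\ G k (f k m)}.
  apply: (@choice _ _ (fun k g => forall m, (m < g m)%N /\ G k (g m))) => k.
  by have [g] := choice (G_unbounded k); exists g.
pose u := fix u k := if k is k'.+1 then f k (u k') else f 0 0.
exists u; split.
- case=> [|k] /=; first by case: (fP 0 0).
  by case: (fP k.+1 (u k)) => /(leq_trans _) ->.
- by move=> k /=; case: (fP k.+1 (u k)).
- by case=> [|k] /=; [case: (fP 0 0) | case: (fP k.+1 (u k))].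
Qed.

Section FamilyMeets.
Context {F : set (set nat)}.

Lemma family_filter_meet_le : family_filter F ->
  forall n (A : nat -> set nat), (forall i, (i <= n)%N -> F (A i)) ->
  F [set p | forall i, (i <= n)%N -> A i p].
Proof.
move=> [F_up F_meet]; elim=> [|n IHn] A FA.
  by apply: F_up (FA 0 isT) _ => p A0p i; rewrite leqn0 => /eqP->.
apply: F_up (F_meet _ _ (IHn A (fun i ni => FA i (leqW ni))) (FA n.+1 (leqnn _))) _.
by move=> p [Ap An1p] i; rewrite leq_eqVlt => /orP[/eqP->|]; last exact: Ap.
Qed.

Hypothesis F_furstenberg : furstenberg_family F.

Lemma furstenberg_filter_fip : family_filter F -> family_fip F.
Proof.
case: F_furstenberg => F_inf _ _ F_filter [|n] A FA; first by exists 0.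
have FAn : F [set p | forall i, (i <= n)%N -> A i p].
  exact: family_filter_meet_le.
by have [p [_ Ap]] := infinite_set_nat_gt 0 (F_inf _ FAn); exists p.
Qed.

Lemma fip_meet_gt : family_fip F ->
  forall n m (A : nat -> set nat), (forall i, (i <= n)%N -> F (A i)) ->
  exists p, (m < p)%N /\ forall i, (i <= n)%N -> A i p.
Proof.
case: F_furstenberg => _ _ F_tail F_fip n m A FA.
have [p Ap] := F_fip n.+1 (fun i => A i `&` [set p | (m.+1 <= p)%N])
  (fun i ni => F_tail _ m.+1 (FA i ni) isT).
by exists p; split; [case: (Ap n (ltnSn n)) | move=> i ni; case: (Ap i ni)].
Qed.

End FamilyMeets.

Section CofiniteFamily.
Context {A : set nat}.
Hypothesis A_infinite : infinite_set A.

Lemma cofinite_family_up (B C : set nat) :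
  cofinite_family A B -> B `<=` C -> cofinite_family A C.
Proof. by move=> AB BC; apply: sub_finite_set AB => n [An nCn]; split => // /BC. Qed.

Lemma cofinite_family_furstenberg : furstenberg_family (cofinite_family A).
Proof.
split.
- move=> B AB finB; apply: A_infinite.
  apply: (@sub_finite_set _ _ ((A `\` B) `|` B)); last by rewrite finite_setU.
  by move=> n An; case: (pselect (B n)) => ?; [right | left].
- exact: cofinite_family_up.
- move=> B m AB _; rewrite /cofinite_family /=.
  apply: (@sub_finite_set _ _ ((A `\` B) `|` `I_m)).
    move=> n [An nBn]; case: (pselect (B n)) => Bn; [right | left] => //=.
    by rewrite ltnNge; apply/negP => mn; apply: nBn.
  by rewrite finite_setU; split => //; exact: finite_II.
Qed.

Lemma cofinite_family_filter : family_filter (cofinite_family A).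
Proof.
split; first exact: cofinite_family_up.
move=> B C AB AC; apply: (@sub_finite_set _ _ ((A `\` B) `|` (A `\` C))).
  move=> n [An nBCn]; case: (pselect (B n)) => Bn; [right | left] => //.
  by split => // Cn; apply: nBCn.
by rewrite finite_setU.
Qed.

Lemma cofinite_family_countable_base : family_countable_base (cofinite_family A).
Proof.
exists (fun k => A `&` [set n | (k <= n)%N]); split.
- move=> k; apply: (@sub_finite_set _ _ `I_k); last exact: finite_II.
  by move=> n [An nAkn] /=; rewrite ltnNge; apply/negP => kn; apply: nAkn.
- move=> B /finite_set_nat_bounded[M AB_lt]; exists M => n [An /= Mn].
  apply: contrapT => nBn; have := AB_lt n (conj An nBn).
  by rewrite ltnNge Mn.
Qed.

Lemma cofinite_family_fip : family_fip (cofinite_family A).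
Proof. exact/furstenberg_filter_fip/cofinite_family_filter/cofinite_family_furstenberg. Qed.

End CofiniteFamily.

Lemma dense_subset {X : topologicalType} {Y Z : set X} :
  Y `<=` Z -> dense Y -> dense Z.
Proof.
by move=> YZ Y_dense O O0 oO; have [x [Ox /YZ Zx]] := Y_dense O O0 oO; exists x.
Qed.

Lemma second_countable_nbhs_basis {X : topologicalType} : @second_countable X ->
  exists e : nat -> set X, (forall j, open (e j)) /\
    (forall (x : X) (U : set X), nbhs x U -> exists j, e j x /\ e j `<=` U).
Proof.
move=> [B B_countable [B_open B_basis]]; have [g g_inj] := countable_injP _ B_countable.
pose e j := if pselect (exists2 V, B V & g V = j) is left gV then projT1 (cid2 gV) else set0.
have e_g V : B V -> e (g V) = V.
  move=> BV; rewrite /e; case: pselect => [gV|[]]; last by exists V.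
  case: (cid2 gV) => W BW gW /=.
  by apply: g_inj; rewrite ?in_setE.
exists e; split.
  move=> j; rewrite /e; case: pselect => [gV|_]; last exact: open0.
  by case: (cid2 gV) => V BV _ /=; exact: B_open.
move=> x U xU; have [V [BV Vx] VU] := B_basis x U xU.
by exists (g V); rewrite e_g.
Qed.

Lemma second_countable_dense_seq {X : topologicalType} {D : set X} {x0 : X} :
  D x0 -> @second_countable X -> dense D ->
  exists y : nat -> X, (forall i, D (y i)) /\ dense (range y).
Proof.
move=> Dx0 X_sc D_dense; have [e [e_open e_basis]] := second_countable_nbhs_basis X_sc.
pose y i := if pselect (exists z, e i z /\ D z) is left ez then projT1 (cid ez) else x0.
exists y; split.
  by move=> i; rewrite /y; case: pselect => // ez; case: (cid ez) => z [].
move=> O O0 O_open; have [z [Oz Dz]] := D_dense O O0 O_open.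
have [j [ejz ejO]] := e_basis z O (open_nbhs_nbhs (conj O_open Oz)).
exists (y j); split; last by exists j.
apply: ejO; rewrite /y; case: pselect => [ez|[]]; last by exists z.
by case: (cid ez) => w [].
Qed.

Section Recurrence.
Context {X : topologicalType} {T : X -> X}.

Lemma quasi_rigid_cofinite_recurrent : quasi_rigid T ->
  exists A : set nat, infinite_set A /\ F_recurrent (cofinite_family A) T.
Proof.
move=> [nk [_ [nk_incr [Y [Y_dense Y_cvg]]]]]; exists (range nk); split.
  move=> /finite_set_nat_bounded[M nk_lt].
  by have := nk_lt (nk M) (ex_intro2 _ _ M I erefl); rewrite ltnNge leq_incr_seq.
apply: dense_subset Y_dense => x Yx U xU.
have [M _ nkU] := Y_cvg x Yx U xU.
apply: (@sub_finite_set _ _ (nk @` `I_M)); last exact/finite_image/finite_II.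
move=> _ [[k _ <-] nU]; exists k => //=.
by rewrite ltnNge; apply/negP => Mk; apply: nU; exact: nkU.
Qed.

Context {F : set (set nat)}.
Hypotheses (F_furstenberg : furstenberg_family F) (F_fip : family_fip F).

Lemma countable_base_recurrent_quasi_rigid :
  family_countable_base F -> F_recurrent F T -> quasi_rigid T.
Proof.
move=> [Ak [FAk Ak_base]] F_rec.
have [nk [nk_gt0 nk_incr Ak_nk]] :
    exists nk : nat -> nat, [/\ forall k, (0 < nk k)%N, forall k, (nk k < nk k.+1)%N &
      forall k i, (i <= k)%N -> Ak i (nk k)].
  apply: (increasing_seq_choice (fun k n => forall i, (i <= k)%N -> Ak i n)) => k m.
  exact: fip_meet_gt F_furstenberg F_fip k m Ak (fun i _ => FAk i).
exists nk; split => //; split => //; exists [set x | F_recurrent_point F T x].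
split => // x x_rec U /x_rec/Ak_base[j AjU].
by exists j => // k /= jk; apply: AjU; exact: Ak_nk.
Qed.

Lemma second_countable_recurrent_quasi_rigid :
  @second_countable X -> F_recurrent F T -> quasi_rigid T.
Proof.
move=> X_sc F_rec; set R := [set x | F_recurrent_point F T x] in F_rec.
have [[x0 Rx0]|noR] := pselect (exists x, R x); last first.
  exists succn; split => //; split => //; exists R; split => // x Rx.
  by exfalso; apply: noR; exists x.
have [y [Ry y_dense]] := second_countable_dense_seq Rx0 X_sc F_rec.
have [e [e_open e_basis]] := second_countable_nbhs_basis X_sc.
pose W k i := [set z | forall j, (j <= k)%N -> e j (y i) -> e j z].
have W_nbhs k i : nbhs (y i) (W k i).
  have : \forall z \near y i, forall j : 'I_k.+1, e j (y i) -> e j z.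
    apply: filter_forall => j; have [eyj|neyj] := pselect (e j (y i)).
      by apply: filterS (open_nbhs_nbhs (conj (e_open j) eyj)) => z ejz.
    by apply: nearW => z /neyj.
  by apply: filterS => z Wz j jk; exact: (Wz (Ordinal (jk : (j < k.+1)%N))).
have [nk [nk_gt0 nk_incr W_nk]] :
    exists nk : nat -> nat, [/\ forall k, (0 < nk k)%N, forall k, (nk k < nk k.+1)%N &
      forall k i, (i <= k)%N -> W k i (iter (nk k) T (y i))].
  apply: (increasing_seq_choice
    (fun k n => forall i, (i <= k)%N -> W k i (iter n T (y i)))) => k m.
  exact: fip_meet_gt F_furstenberg F_fip k m _ (fun i _ => Ry i _ (W_nbhs k i)).
exists nk; split => //; split => //; exists (range y); split => // _ [i _ <-] U.
move=> /e_basis[j [eyj ejU]]; exists (maxn i j) => // k /= ijk.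
apply/ejU/(W_nk k i); rewrite ?(leq_trans _ ijk) ?leq_maxl ?leq_maxr //.
Qed.

End Recurrence.

Theorem mainTheorem9 (X : topologicalType) (T : X -> X) :
  hausdorff_space X -> continuous T ->
  [/\ quasi_rigid T <->
        (exists A : set nat, infinite_set A /\ F_recurrent (cofinite_family A) T),
      quasi_rigid T <->
        (exists F : set (set nat), [/\ furstenberg_family F, family_filter F,
            family_countable_base F & F_recurrent F T]) &
      @second_countable X ->
        (quasi_rigid T <->
           (exists F : set (set nat), [/\ furstenberg_family F, family_fip F &
               F_recurrent F T]))].
Proof.
move=> _ _.
have cofinite_filter_base A : infinite_set A -> F_recurrent (cofinite_family A) T ->
    exists F, [/\ furstenberg_family F, family_filter F,
      family_countable_base F & F_recurrent F T].
  move=> A_inf A_rec; exists (cofinite_family A); split => //.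
  + exact: cofinite_family_furstenberg.
  + exact: cofinite_family_filter.
  + exact: cofinite_family_countable_base.
have filter_base_quasi_rigid : (exists F, [/\ furstenberg_family F, family_filter F,
    family_countable_base F & F_recurrent F T]) -> quasi_rigid T.
  move=> [F [F_furst F_filter F_base F_rec]].
  have F_fip := furstenberg_filter_fip F_furst F_filter.
  exact: countable_base_recurrent_quasi_rigid F_furst F_fip F_base F_rec.
split; [split | split | move=> X_sc; split].
- exact: quasi_rigid_cofinite_recurrent.
- by move=> [A [A_inf A_rec]]; apply/filter_base_quasi_rigid/(cofinite_filter_base A).
- by move=> /quasi_rigid_cofinite_recurrent[A [A_inf A_rec]]; exact: (cofinite_filter_base A).
- exact: filter_base_quasi_rigid.
- move=> /quasi_rigid_cofinite_recurrent[A [A_inf A_rec]].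
  exists (cofinite_family A); split => //.
  + exact: cofinite_family_furstenberg.
  + exact: cofinite_family_fip.
- move=> [F [F_furst F_fip F_rec]].
  exact: second_countable_recurrent_quasi_rigid F_furst F_fip X_sc F_rec.
Qed.
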